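(* There exists a $(697,25)$-arc in $\operatorname{PG}(2,29)$; hence $m_{25}(2,29)\ge 697$.
   Context: Points of $\operatorname{PG}(2,q)$ are the 1-dimensional subspaces of $\operatorname{GF}(q)^3$, lines are the 2-dimensional subspaces. An $(n,r)$-arc in $\operatorname{PG}(2,q)$ is a set $\mathcal B$ of $n$ points such that every line contains at most $r$ points of $\mathcal B$ and at least one line contains exactly $r$ points of $\mathcal B$. $m_r(2,q)$ is the maximum $n$ for which an $(n,r)$-arc in $\operatorname{PG}(2,q)$ exists. *)

From HB Require Import structures.
From mathcomp Require Import all_boot all_order all_algebra all_field.
Set Implicit Arguments. Unset Strict Implicit. Unset Printing Implicit Defensive.
Import GRing.Theory.
Local Open Scope ring_scope.

Definition PG2_point (F : fieldType) (P : {vspace 'rV[F]_3}) : bool :=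
  \dim P == 1%N.
Definition PG2_line (F : fieldType) (L : {vspace 'rV[F]_3}) : bool :=
  \dim L == 2%N.

Definition on_line (F : fieldType) (B : seq {vspace 'rV[F]_3})
  (L : {vspace 'rV[F]_3}) : nat :=
  count (fun P => (P <= L)%VS) B.

(* B (a duplicate-free list of points, i.e. a set of n points) is an
   (n,r)-arc in PG(2,F). *)
Definition is_arc (F : fieldType) (n r : nat) (B : seq {vspace 'rV[F]_3}) : Prop :=
  [/\ uniq B, size B = n, all (@PG2_point F) B,
      (forall L, PG2_line L -> (on_line B L <= r)%N)
    & exists2 L, PG2_line L & on_line B L = r].

From HB Require Import structures.
From mathcomp Require Import all_boot all_order all_algebra all_field.
From mathcomp Require Import ring.
Set Implicit Arguments. Unset Strict Implicit. Unset Printing Implicit Defensive.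
Import GRing.Theory.
Local Open Scope ring_scope.

(* The proof is a verified certificate.  Over any field F, a line of PG(2,F),
   i.e. a 2-dimensional subspace of F^3, is the kernel of the linear form
   w |-> <w, n> for a nonzero normal vector n (for the line spanned by u and v
   one can take n = u x v), and conversely every such kernel is a line.
   Normalizing n so that its first nonzero coordinate is 1 makes it unique,
   and distinct monic vectors span distinct points.

   Over F_p these monic vectors are the p^2 + p + 1 triples (1,a,b), (0,1,b),
   (0,0,1) with a, b < p.  Hence a list of monic triples is an (n,r)-arc as
   soon as, for every monic normal s, at most r of the triples t satisfy
   <t,s> = 0 (mod p), with equality for some s: this is [arc_certificate].
   The theorem follows by evaluating these finitely many conditions for the
   explicit arc [arc29] with p = 29. *)

Definition i0 : 'I_3 := @Ordinal 3 0 isT.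
Definition i1 : 'I_3 := @Ordinal 3 1 isT.
Definition i2 : 'I_3 := @Ordinal 3 2 isT.

Lemma ord3_cases (P : 'I_3 -> Prop) : P i0 -> P i1 -> P i2 -> forall i, P i.
Proof.
move=> P0 P1 P2 [[|[|[|//]]] lti].
- by rewrite (_ : Ordinal lti = i0) //; apply: val_inj.
- by rewrite (_ : Ordinal lti = i1) //; apply: val_inj.
- by rewrite (_ : Ordinal lti = i2) //; apply: val_inj.
Qed.

Section PlaneGeometry.

Variable F : fieldType.
Implicit Types (a b c k : F) (u v w n : 'rV[F]_3).

Lemma row3_eq u v :
  u 0 i0 = v 0 i0 -> u 0 i1 = v 0 i1 -> u 0 i2 = v 0 i2 -> u = v.
Proof. by move=> e0 e1 e2; apply/rowP; elim/ord3_cases. Qed.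

Definition mk3 a b c : 'rV[F]_3 := \row_(i < 3) [:: a; b; c]`_i.

Lemma mk3E a b c i : mk3 a b c 0 i = [:: a; b; c]`_i.
Proof. by rewrite mxE. Qed.

Definition dot u v : F := u 0 i0 * v 0 i0 + u 0 i1 * v 0 i1 + u 0 i2 * v 0 i2.

Definition cross u v : 'rV[F]_3 :=
  mk3 (u 0 i1 * v 0 i2 - u 0 i2 * v 0 i1) (u 0 i2 * v 0 i0 - u 0 i0 * v 0 i2)
      (u 0 i0 * v 0 i1 - u 0 i1 * v 0 i0).

Lemma dotDl u v n : dot (u + v) n = dot u n + dot v n.
Proof. by rewrite /dot !mxE; ring. Qed.

Lemma dotZl k u n : dot (k *: u) n = k * dot u n.
Proof. by rewrite /dot !mxE; ring. Qed.

Lemma dotZr k u n : dot u (k *: n) = k * dot u n.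
Proof. by rewrite /dot !mxE; ring. Qed.

Lemma dot_crossl u v : dot u (cross u v) = 0.
Proof. by rewrite /dot !mk3E /=; ring. Qed.

Lemma dot_crossr u v : dot v (cross u v) = 0.
Proof. by rewrite /dot !mk3E /=; ring. Qed.

Lemma dot_nondegenerate n : (forall w, dot w n = 0) -> n = 0.
Proof.
move=> perp_n; apply: row3_eq; rewrite mxE.
- by rewrite -(perp_n (mk3 1 0 0)) /dot !mk3E /=; ring.
- by rewrite -(perp_n (mk3 0 1 0)) /dot !mk3E /=; ring.
- by rewrite -(perp_n (mk3 0 0 1)) /dot !mk3E /=; ring.
Qed.

Lemma cross_eq0_proportional u v :
  cross u v = 0 -> forall i j, u 0 i * v 0 j = u 0 j * v 0 i.
Proof.
move=> uv0; have coord j : cross u v 0 j = 0 by rewrite uv0 mxE.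
move: (coord i0) (coord i1) (coord i2); rewrite !mk3E /=.
move=> /subr0_eq c12 /subr0_eq c20 /subr0_eq c01.
by elim/ord3_cases; elim/ord3_cases; rewrite // ?c12 ?c20 ?c01.
Qed.

Definition dotr n : 'rV[F]_3 -> F^o := fun w => dot w n.

Fact dotr_is_linear n : linear (dotr n).
Proof. by move=> k u v; rewrite /dotr dotDl dotZl. Qed.

HB.instance Definition _ n :=
  GRing.isLinear.Build F 'rV[F]_3 F^o _ (dotr n) (dotr_is_linear n).

Definition hyperplane n : {vspace 'rV[F]_3} := lker (linfun (dotr n)).

Lemma mem_hyperplane n w : (w \in hyperplane n) = (dot w n == 0).
Proof. by rewrite memv_ker lfunE. Qed.

Lemma hyperplaneZ k n : k != 0 -> hyperplane (k *: n) = hyperplane n.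
Proof.
by move=> k0; apply/vspaceP => w; rewrite !mem_hyperplane dotZr mulf_eq0 (negbTE k0).
Qed.

(* By rank-nullity, a nonzero normal defines a 2-dimensional subspace:
   its linear form has a 1-dimensional image. *)
Lemma dim_hyperplane n : n != 0 -> \dim (hyperplane n) = 2%N.
Proof.
move=> n0; set f := linfun (dotr n).
have := limg_ker_dim f fullv; rewrite capfv dimvf dim_matrix.
suff -> : \dim (f @: fullv) = 1%N by rewrite addn1 => -[].
apply/eqP; rewrite eqn_leq; apply/andP; split.
  by apply: leq_trans (dimvS (subvf (limg f))) _; rewrite dimvf.
rewrite lt0n dimv_eq0; apply: contra_neq n0 => img0; apply: dot_nondegenerate => w.
have : f w \in limg f by rewrite memv_img ?memvf.
by rewrite img0 memv0 lfunE => /eqP.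
Qed.

Lemma cross_neq0 u v : free [:: u; v] -> cross u v != 0.
Proof.
rewrite free_cons seq1_free span_seq1 => /andP [u_notin_v v_neq0].
apply: contra u_notin_v => /eqP /cross_eq0_proportional prop.
case/rV0Pn: v_neq0 => j vj_neq0; apply/vlineP; exists (u 0 j / v 0 j).
by apply/rowP => i; rewrite mxE; apply: (mulIf vj_neq0); rewrite mulrAC divfK // prop.
Qed.

(* The plane spanned by two independent vectors is the hyperplane with
   their cross product as normal: it is contained in it, and both have
   dimension 2. *)
Lemma span_cross u v :
  \dim <<[:: u; v]>> = 2%N -> <<[:: u; v]>>%VS = hyperplane (cross u v).
Proof.
move=> dim_uv; have uv_free : free [:: u; v] by rewrite /free dim_uv.
have sub : (<<[:: u; v]>> <= hyperplane (cross u v))%VS.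
  apply/span_subvP => w; rewrite !inE => /orP [] /eqP ->;
  by rewrite mem_hyperplane ?dot_crossl ?dot_crossr.
by apply/eqP; rewrite eqEdim sub dim_uv dim_hyperplane // cross_neq0.
Qed.

(* The first nonzero coordinate of v (0 if v = 0); v is monic when it is 1,
   and normalize v rescales v to make it monic. *)
Definition lead_coord v : F :=
  if v 0 i0 != 0 then v 0 i0 else if v 0 i1 != 0 then v 0 i1 else v 0 i2.

Definition monic3 v : bool := lead_coord v == 1.

Definition normalize v : 'rV[F]_3 := (lead_coord v)^-1 *: v.

Lemma lead_coordZ k v : k != 0 -> lead_coord (k *: v) = k * lead_coord v.
Proof.
move=> k0; rewrite /lead_coord !mxE !mulf_eq0 (negbTE k0) /=.
by case: ifP => //; case: ifP.
Qed.

Lemma lead_coord_eq0 v : (lead_coord v == 0) = (v == 0).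
Proof.
apply/idP/eqP => [|->]; last by rewrite /lead_coord !mxE eqxx.
rewrite /lead_coord; case: ifPn => [/negbTE-> //|/negPn/eqP v0].
case: ifPn => [/negbTE-> //|/negPn/eqP v1 /eqP v2].
by apply: row3_eq; rewrite mxE.
Qed.

Lemma monic3_neq0 v : monic3 v -> v != 0.
Proof. by rewrite -lead_coord_eq0 => /eqP ->; rewrite oner_eq0. Qed.

Lemma normalize_monic v : monic3 v -> normalize v = v.
Proof. by rewrite /normalize => /eqP ->; rewrite invr1 scale1r. Qed.

Lemma monic3_normalize v : v != 0 -> monic3 (normalize v).
Proof.
rewrite -lead_coord_eq0 => lc0.
by rewrite /monic3 /normalize lead_coordZ ?invr_eq0 // mulVf.
Qed.

Lemma normalizeZ k v : k != 0 -> normalize (k *: v) = normalize v.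
Proof. by move=> k0; rewrite /normalize lead_coordZ // scalerA invfM mulrAC mulVf ?mul1r. Qed.

Lemma monic3_line_inj u v : monic3 u -> monic3 v -> <[u]>%VS = <[v]>%VS -> u = v.
Proof.
move=> mu mv uv; have : u \in <[v]>%VS by rewrite -uv memv_line.
case/vlineP => k def_u; have k0 : k != 0.
  by move: (monic3_neq0 mu); rewrite def_u; apply: contra_neq => ->; rewrite scale0r.
by rewrite -(normalize_monic mu) -(normalize_monic mv) def_u normalizeZ.
Qed.

Lemma line_is_hyperplane L :
  \dim L = 2%N -> exists2 n, monic3 n & L = hyperplane n.
Proof.
move=> dimL; have /andP [/eqP spanL freeL] := vbasisP L.
have : size (vbasis L) = 2%N by rewrite size_tuple.
move: spanL freeL; case: (tval (vbasis L)) => [|u [|v [|? ?]]] // spanL freeL _.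
have n0 : cross u v != 0 by apply: cross_neq0.
exists (normalize (cross u v)); first exact: monic3_normalize n0.
by rewrite /normalize hyperplaneZ ?invr_eq0 ?lead_coord_eq0 // -span_cross spanL.
Qed.

End PlaneGeometry.

Section PrimeField.

Variable p : nat.
Hypothesis p_pr : prime p.

Lemma Fp_val_lt (y : 'F_p) : (val y < p)%N.
Proof. by rewrite -[X in (_ < X)%N](Fp_cast p_pr) ltn_ord. Qed.

Lemma Fp_natr_val (y : 'F_p) : (val y)%:R = y.
Proof. by apply: val_inj; rewrite /= val_Fp_nat // modn_small // Fp_val_lt. Qed.

Lemma Fp_natr_inj a b : (a < p)%N -> (b < p)%N -> (a%:R : 'F_p) = b%:R -> a = b.
Proof. by move=> ltap ltbp /(congr1 val); rewrite /= !val_Fp_nat // !modn_small. Qed.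

Lemma Fp_natr_eq0 m : ((m%:R : 'F_p) == 0) = (p %| m)%N.
Proof. by rewrite (GRing.dvdn_pcharf (pchar_Fp p_pr)). Qed.

(* Integer triples encode vectors of F_p^3; tdot computes the form on them
   without leaving nat. *)
Definition triple := (nat * nat * nat)%type.

Definition vec (t : triple) : 'rV['F_p]_3 := mk3 t.1.1%:R t.1.2%:R t.2%:R.

Definition tdot (t s : triple) : nat := (t.1.1 * s.1.1 + t.1.2 * s.1.2 + t.2 * s.2)%N.

Lemma dot_vec t s : dot (vec t) (vec s) = (tdot t s)%:R.
Proof. by rewrite /dot /vec !mk3E /= /tdot !natrD !natrM. Qed.

(* The encodings of the p^2 + p + 1 monic vectors of F_p^3, one for each
   point (and, as normals, for each line) of PG(2,p). *)
Definition monic_triples : seq triple :=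
  [seq (1, a, b) | a <- iota 0 p, b <- iota 0 p]%N
  ++ [seq (0, 1, b) | b <- iota 0 p]%N ++ [:: (0, 0, 1)%N].

Lemma monic_triplesP s : s \in monic_triples -> monic3 (vec s).
Proof.
rewrite !mem_cat mem_seq1 => /or3P [/allpairsPdep [a [b [_ _ ->]]]|/mapP [b _ ->]|/eqP ->];
by rewrite /monic3 /lead_coord /vec !mk3E /= ?oner_eq0 ?eqxx.
Qed.

(* Monic triples are reduced modulo p, so vec is injective on them. *)
Lemma monic_triples_small s :
  s \in monic_triples -> [&& s.1.1 < p, s.1.2 < p & s.2 < p]%N.
Proof.
have lt0p : (0 < p)%N by rewrite prime_gt0.
have lt1p : (1 < p)%N by rewrite prime_gt1.
rewrite !mem_cat mem_seq1 => /or3P [/allpairsPdep [a [b [+ + ->]]]|/mapP [b + ->]|/eqP ->].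
- by rewrite !mem_iota /= lt1p => -> ->.
- by rewrite mem_iota /= lt0p lt1p.
- by rewrite /= lt0p lt1p.
Qed.

Lemma vec_inj_monic : {in monic_triples &, injective vec}.
Proof.
move=> [[a b] c] [[a' b'] c'] /monic_triples_small/and3P [la lb lc].
move=> /monic_triples_small/and3P [la' lb' lc'] eq_vec.
have coord i : vec (a, b, c) 0 i = vec (a', b', c') 0 i by rewrite eq_vec.
move: (coord i0) (coord i1) (coord i2); rewrite /vec !mk3E /=.
by move=> /Fp_natr_inj-> // /Fp_natr_inj-> // /Fp_natr_inj->.
Qed.

Lemma monic_triples_complete n : monic3 n -> exists2 s, s \in monic_triples & vec s = n.
Proof.
have val_in_iota (y : 'F_p) : val y \in iota 0 p by rewrite mem_iota Fp_val_lt.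
rewrite /monic3 /lead_coord; case: ifPn => [_ /eqP n0|/negPn/eqP n0].
  exists (1%N, val (n 0 i1), val (n 0 i2)).
    by rewrite mem_cat (allpairs_f (fun a b => (1, a, b)%N)).
  by apply: row3_eq; rewrite mk3E /= ?Fp_natr_val ?n0.
case: ifPn => [_ /eqP n1|/negPn/eqP n1 /eqP n2].
  exists (0%N, 1%N, val (n 0 i2)).
    by rewrite !mem_cat (map_f (fun b => (0, 1, b)%N)) ?orbT.
  by apply: row3_eq; rewrite mk3E /= ?Fp_natr_val ?n0 ?n1.
exists (0, 0, 1)%N; first by rewrite !mem_cat mem_seq1 eqxx !orbT.
by apply: row3_eq; rewrite mk3E /= ?n0 ?n1 ?n2.
Qed.

Definition points (ts : seq triple) : seq {vspace 'rV['F_p]_3} :=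
  [seq <[vec t]>%VS | t <- ts].

Definition incidence (ts : seq triple) (s : triple) : nat :=
  count (fun t => p %| tdot t s)%N ts.

Lemma on_hyperplane ts s : on_line (points ts) (hyperplane (vec s)) = incidence ts s.
Proof.
rewrite /on_line count_map; apply: eq_count => t /=.
by rewrite -memvE mem_hyperplane dot_vec Fp_natr_eq0.
Qed.

Theorem arc_certificate n r ts :
  uniq ts -> size ts = n -> all (mem monic_triples) ts ->
  all (fun s => incidence ts s <= r)%N monic_triples ->
  has (fun s => incidence ts s == r) monic_triples ->
  is_arc n r (points ts).
Proof.
move=> ts_uniq ts_size /allP ts_monic /allP inc_le /hasP [s0 s0_monic /eqP inc_s0].
split.
- rewrite map_inj_in_uniq // => s t /ts_monic ms /ts_monic mt line_st.
  apply: vec_inj_monic => //.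
  exact: monic3_line_inj (monic_triplesP ms) (monic_triplesP mt) line_st.
- by rewrite size_map.
- apply/allP => _ /mapP [t /ts_monic mt ->].
  by rewrite /PG2_point dim_vline monic3_neq0 ?monic_triplesP.
- move=> L /eqP /line_is_hyperplane [m monic_m ->].
  have [s s_monic <-] := monic_triples_complete monic_m.
  by rewrite on_hyperplane inc_le.
- exists (hyperplane (vec s0)); last by rewrite on_hyperplane.
  by rewrite /PG2_line dim_hyperplane // monic3_neq0 ?monic_triplesP.
Qed.

End PrimeField.

(* The arc: row a lists the b with (1, a, b) in the arc, the next list the
   b with (0, 1, b); the point (0, 0, 1) belongs to the arc as well. *)
Definition arc29_affine_rows : seq (seq nat) := [::
  [:: 0; 2; 3; 4; 6; 7; 8; 9; 10; 11; 12; 13; 15; 16; 17; 18; 19; 20; 21; 24; 25; 26; 27; 28];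
  [:: 0; 1; 2; 3; 4; 5; 7; 8; 9; 10; 11; 12; 13; 15; 16; 18; 19; 20; 21; 22; 23; 24; 25; 28];
  [:: 0; 1; 2; 4; 5; 6; 7; 8; 9; 10; 11; 13; 15; 16; 17; 19; 20; 21; 23; 24; 25; 26; 27; 28];
  [:: 0; 2; 3; 4; 5; 6; 9; 11; 12; 13; 15; 16; 17; 19; 20; 21; 22; 23; 24; 25; 26; 27; 28];
  [:: 0; 3; 4; 5; 6; 7; 8; 9; 10; 11; 12; 15; 16; 17; 18; 19; 20; 21; 23; 24; 25; 26; 27; 28];
  [:: 0; 1; 2; 3; 4; 5; 6; 7; 8; 9; 11; 12; 13; 15; 16; 17; 19; 20; 21; 22; 24; 27; 28];
  [:: 1; 2; 3; 4; 5; 7; 9; 10; 11; 12; 13; 16; 17; 18; 19; 20; 22; 24; 25; 26; 27; 28];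
  [:: 0; 1; 3; 4; 5; 6; 8; 9; 10; 11; 12; 13; 15; 17; 18; 19; 21; 22; 23; 24; 25; 26; 27];
  [:: 0; 1; 2; 5; 6; 7; 8; 9; 10; 12; 13; 15; 16; 17; 18; 19; 20; 21; 22; 23; 24; 25; 26];
  [:: 1; 2; 3; 4; 5; 7; 8; 10; 11; 12; 13; 16; 17; 18; 19; 21; 22; 24; 25; 26; 27; 28];
  [:: 0; 2; 3; 4; 5; 6; 7; 8; 9; 10; 11; 13; 15; 16; 17; 18; 20; 21; 22; 23; 24; 25; 26; 28];
  [:: 1; 2; 3; 5; 6; 7; 8; 9; 11; 12; 13; 16; 17; 18; 20; 21; 22; 23; 24; 26; 27; 28];
  [:: 0; 1; 2; 3; 4; 5; 6; 7; 8; 9; 10; 12; 13; 15; 16; 17; 18; 19; 21; 23; 26; 27; 28];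
  [:: 1; 2; 3; 4; 6; 8; 9; 10; 11; 12; 13; 16; 18; 19; 20; 21; 22; 23; 24; 25; 26; 27; 28];
  [:: 0; 1; 2; 4; 6; 7; 8; 11; 12; 13; 15; 16; 18; 19; 20; 21; 22; 23; 24; 25; 26; 27; 28];
  [:: 2; 3; 4; 6; 7; 8; 9; 11; 12; 13; 15; 16; 17; 18; 19; 20; 21; 22; 23; 24; 25; 26; 27];
  [:: 1; 2; 3; 4; 5; 6; 7; 8; 9; 10; 11; 13; 16; 17; 18; 19; 20; 21; 23; 25; 26; 27; 28];
  [:: 0; 1; 2; 3; 4; 5; 6; 7; 8; 9; 11; 12; 13; 15; 16; 18; 19; 21; 22; 23; 25; 26; 27; 28];
  [:: 0; 1; 2; 3; 4; 5; 8; 9; 10; 11; 12; 13; 15; 17; 18; 20; 21; 22; 23; 24; 26; 27; 28];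
  [:: 0; 2; 3; 4; 5; 6; 7; 8; 9; 10; 11; 13; 15; 16; 17; 18; 20; 21; 22; 23; 24; 25; 26; 28];
  [:: 0; 1; 3; 4; 5; 7; 10; 11; 12; 13; 15; 16; 17; 18; 20; 21; 22; 23; 24; 25; 26; 27; 28];
  [:: 0; 1; 2; 3; 5; 6; 8; 10; 12; 13; 15; 16; 17; 18; 19; 20; 21; 22; 23; 24; 25; 26; 27; 28];
  [:: 1; 2; 4; 5; 6; 7; 8; 9; 10; 11; 12; 13; 15; 17; 18; 19; 20; 21; 22; 23; 24; 25; 27];
  [:: 0; 1; 2; 3; 4; 5; 6; 7; 8; 10; 11; 12; 13; 15; 16; 17; 18; 19; 20; 22; 26; 27; 28];
  [:: 0; 1; 2; 3; 4; 5; 6; 7; 8; 9; 10; 11; 12; 13; 15; 17; 19; 20; 22; 23; 24; 25; 27; 28];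
  [:: 0; 1; 3; 5; 6; 7; 9; 10; 11; 12; 15; 16; 18; 19; 20; 21; 22; 23; 24; 25; 26; 27; 28];
  [:: 1; 2; 3; 4; 5; 6; 9; 10; 11; 12; 15; 17; 18; 19; 20; 21; 22; 23; 24; 25; 26; 27; 28];
  [:: 0; 1; 2; 4; 5; 6; 7; 8; 10; 11; 13; 15; 16; 17; 18; 19; 20; 22; 23; 24; 25; 26; 27];
  [:: 0; 1; 2; 3; 4; 6; 7; 8; 9; 10; 12; 15; 16; 18; 19; 20; 21; 22; 23; 24; 25; 26; 28]].

Definition arc29_infinite_row : seq nat :=
  [:: 1; 2; 3; 4; 6; 7; 8; 9; 10; 11; 13; 14; 15; 16; 17; 18; 19; 20; 22; 23; 26; 27; 28].

Definition arc29 : seq triple :=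
  [seq (1, a, b) | a <- iota 0 29, b <- nth [::] arc29_affine_rows a]%N
  ++ [seq (0, 1, b) | b <- arc29_infinite_row]%N ++ [:: (0, 0, 1)%N].

Lemma prime29 : prime 29. Proof. by []. Qed.

Theorem mainTheorem15 :
  exists B : seq {vspace 'rV['F_29]_3}, is_arc 697 25 B.
Proof.
exists (points 29 arc29).
by apply: (arc_certificate prime29); vm_compute.
Qed.
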